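(* Let $r\in\mathbb{N}$ and $\lambda\in(-1,1)$. Then there exists $f\in C^r[-1,1]$ with $f\equiv0$ on $[-1,\lambda]$ such that there is no $g\in C^{r+1}[-1,1]$ satisfying $g^{(i)}(\lambda)=f^{(i)}(\lambda)$ for $0\le i\le\hat r$, together with $g\le f$ on $(\lambda-\varepsilon,\lambda]$ and $g\ge f$ on $[\lambda,\lambda+\varepsilon)$ for some $\varepsilon>0$, where $\hat r:=2\lceil r/2\rceil-1$ (i.e. $\hat r=r$ if $r$ is odd and $\hat r=r-1$ if $r$ is even). *)

From Stdlib Require Import Reals ZArith.
From Coquelicot Require Import Coquelicot.
Open Scope R_scope.

Definition deriv_within (a b : R) (f : R -> R) (x l : R) : Prop :=
  filterlim (fun y => (f y - f x) / (y - x))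
    (within (fun y => y <> x /\ a <= y <= b) (locally x)) (locally l).

Definition cont_within (a b : R) (h : R -> R) (x : R) : Prop :=
  filterlim h (within (fun y => a <= y <= b) (locally x)) (locally (h x)).

(* f is in C^r[a,b] with derivatives F 0 = f, F 1 = f', ..., F r = f^(r)
   on [a,b]. (Values of F outside [a,b] are irrelevant.) *)
Definition Cr_with_derivs (r : nat) (a b : R) (f : R -> R) (F : nat -> R -> R) : Prop :=
  (forall x, a <= x <= b -> F 0%nat x = f x) /\
  (forall k x, (k < r)%nat -> a <= x <= b -> deriv_within a b (F k) x (F (S k) x)) /\
  (forall x, a <= x <= b -> cont_within a b (F r) x).

(* rhat r = 2 * ceil(r/2) - 1 *)
Definition rhat (r : nat) : Z := (2 * Z.of_nat ((r + 1) / 2) - 1)%Z.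

From Stdlib Require Import Reals ZArith Lra Lia.
From Coquelicot Require Import Coquelicot.
Open Scope R_scope.

(* The witness is f = (x - lam)_+^(r + 1/2): its r-th derivative is a multiple
   of sqrt (x - lam)_+, continuous but with infinite slope at lam.  Let g be
   C^(r+1), with the jet of f up to order rhat r at lam, g <= f = 0 to the left
   and g >= f to the right of lam.  Then g^(i)(lam) = 0 for i < r, and
   g^(r)(lam) <= 0: for r odd this is part of the jet condition, and for r even
   a positive g^(r)(lam) would make the signs of the g^(r-j) alternate to the
   left of lam, ending with g > 0 there.  Integrating g^(r+1) <= M from lam
   r+1 times gives g(x) <= M (x - lam)^(r+1) to the right of lam, which is
   eventually smaller than (x - lam)^(r+1/2). *)

Lemma ball_Rabs (x e y : R) : ball x e y <-> Rabs (y - x) < e.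
Proof. reflexivity. Qed.

Lemma deriv_within_of_derivable_pt_lim (a b : R) (f : R -> R) (x l : R) :
  derivable_pt_lim f x l -> deriv_within a b f x l.
Proof.
  intros Hf. apply filterlim_locally. intros eps.
  destruct (Hf eps (cond_pos eps)) as [d Hd].
  exists d. intros y Hy [Hyx _]. change R in y. apply ball_Rabs.
  specialize (Hd (y - x)). replace (x + (y - x)) with y in Hd by ring.
  apply Hd; [intro E; apply Hyx; lra | exact Hy].
Qed.

Lemma derivable_pt_lim_of_deriv_within (a b : R) (f : R -> R) (x l : R) :
  a < x < b -> deriv_within a b f x l -> derivable_pt_lim f x l.
Proof.
  intros Hx Hf eps Heps.
  destruct (proj1 (filterlim_locally _ _) Hf (mkposreal eps Heps)) as [d Hd].
  assert (Hd' : 0 < Rmin d (Rmin (x - a) (b - x))).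
  { apply Rmin_pos; [apply cond_pos | apply Rmin_pos; lra]. }
  exists (mkposreal _ Hd'). intros h Hh0 Hh. simpl in Hh.
  assert (Hm := Rmin_l d (Rmin (x - a) (b - x))).
  assert (Hm' := Rmin_r d (Rmin (x - a) (b - x))).
  assert (Hab := Rmin_l (x - a) (b - x)). assert (Hab' := Rmin_r (x - a) (b - x)).
  apply Rabs_def2 in Hh.
  assert (Hy : x + h <> x /\ a <= x + h <= b) by (split; [intro; apply Hh0 |]; lra).
  assert (Hb : ball x d (x + h)) by (apply ball_Rabs, Rabs_def1; lra).
  specialize (Hd _ Hb Hy). apply ball_Rabs in Hd.
  replace (x + h - x) with h in Hd by ring. exact Hd.
Qed.

Lemma cont_within_of_continuity_pt (a b : R) (h : R -> R) (x : R) :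
  continuity_pt h x -> cont_within a b h x.
Proof.
  intros Hh P HP. destruct (proj1 (continuity_pt_filterlim _ _) Hh P HP) as [d Hd].
  exists d. intros y Hy _. exact (Hd y Hy).
Qed.

Lemma cont_within_bounded_near (a b : R) (h : R -> R) (x : R) :
  a < x < b -> cont_within a b h x ->
  exists d, 0 < d /\ a < x - d /\ x + d < b /\
    forall y, x - d <= y <= x + d -> h y <= h x + 1.
Proof.
  intros Hx Hh.
  destruct (proj1 (filterlim_locally _ _) Hh (mkposreal 1 Rlt_0_1)) as [e He].
  set (d := Rmin (e / 2) (Rmin ((x - a) / 2) ((b - x) / 2))).
  assert (Hm := Rmin_l (e / 2) (Rmin ((x - a) / 2) ((b - x) / 2))).
  assert (Hm' := Rmin_r (e / 2) (Rmin ((x - a) / 2) ((b - x) / 2))).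
  assert (Hab := Rmin_l ((x - a) / 2) ((b - x) / 2)).
  assert (Hab' := Rmin_r ((x - a) / 2) ((b - x) / 2)).
  assert (He0 := cond_pos e).
  assert (Hd : 0 < d) by (apply Rmin_pos; [| apply Rmin_pos]; lra).
  fold d in Hm, Hm'.
  exists d. split; [exact Hd |]. split; [lra |]. split; [lra |].
  intros y Hy.
  assert (Hb : ball x e y) by (apply ball_Rabs, Rabs_def1; lra).
  specialize (He y Hb ltac:(lra)). change (Rabs (h y - h x) < 1) in He. apply Rabs_def2 in He. lra.
Qed.

Lemma Cr_succ_near (a b : R) (n : nat) (g : R -> R) (G : nat -> R -> R) (lam e : R) :
  Cr_with_derivs (S n) a b g G -> a < lam < b -> 0 < e ->
  exists d M, 0 < d < e /\ 0 < M /\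
    (forall k x, (k <= n)%nat -> lam - d <= x <= lam + d ->
       derivable_pt_lim (G k) x (G (S k) x)) /\
    (forall x, lam - d <= x <= lam + d -> G (S n) x <= M) /\
    (forall x, lam - d <= x <= lam + d -> G 0%nat x = g x).
Proof.
  intros [HG0 [HGderiv HGcont]] Hlam He.
  destruct (cont_within_bounded_near a b (G (S n)) lam Hlam (HGcont lam ltac:(lra)))
    as [d [Hd [Ha [Hb HM]]]].
  assert (Hm := Rmin_l d (e / 2)). assert (Hm' := Rmin_r d (e / 2)).
  exists (Rmin d (e / 2)), (Rabs (G (S n) lam) + 1).
  assert (HGabs := Rle_abs (G (S n) lam)). assert (HGpos := Rabs_pos (G (S n) lam)).
  split; [split; [apply Rmin_pos |]; lra |]. split; [lra |].
  split; [| split].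
  - intros k x Hk Hx. apply (derivable_pt_lim_of_deriv_within a b); [lra |].
    apply HGderiv; [lia | lra].
  - intros x Hx. specialize (HM x ltac:(lra)). lra.
  - intros x Hx. apply HG0. lra.
Qed.

Lemma rhat_gt_pred (r k : nat) : (k < r)%nat -> (Z.of_nat k <= rhat r)%Z.
Proof.
  intros Hk. unfold rhat.
  assert (Hq := Nat.div_mod_eq (r + 1) 2).
  assert (Hm := Nat.mod_upper_bound (r + 1) 2 ltac:(lia)). lia.
Qed.

Lemma rhat_odd (r : nat) : Nat.odd r = true -> rhat r = Z.of_nat r.
Proof.
  intros Hr. apply Nat.odd_spec in Hr as [q ->]. unfold rhat.
  replace (2 * q + 1 + 1)%nat with ((q + 1) * 2)%nat by lia.
  rewrite Nat.div_mul by lia. lia.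
Qed.

Section PowSqrt.

Variable lam : R.

(* Since sqrt vanishes on negatives, this is (x - lam)_+^(n + 1/2). *)
Definition pow_sqrt (n : nat) (x : R) : R := (x - lam) ^ n * sqrt (x - lam).

Lemma pow_sqrt_le_lam (n : nat) (x : R) : x <= lam -> pow_sqrt n x = 0.
Proof. intros Hx. unfold pow_sqrt. rewrite sqrt_neg_0 by lra. ring. Qed.

Lemma continuity_pt_pow_sqrt (n : nat) (x : R) : continuity_pt (pow_sqrt n) x.
Proof.
  apply continuity_pt_filterlim.
  assert (Hsub : continuous (fun y : R => y - lam) x).
  { apply (continuous_minus (fun y => y) (fun _ => lam));
      [apply continuous_id | apply continuous_const]. }
  apply (continuous_mult (fun y => (y - lam) ^ n) (fun y => sqrt (y - lam))).
  - apply (continuous_comp (fun y => y - lam) (fun y => y ^ n)); [exact Hsub |].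
    apply continuity_pt_filterlim, derivable_continuous_pt, derivable_pt_pow.
  - apply continuous_sqrt_comp, Hsub.
Qed.

Lemma derivable_pt_lim_pow_sqrt (n : nat) (x : R) :
  derivable_pt_lim (pow_sqrt (S n)) x ((INR (S n) + / 2) * pow_sqrt n x).
Proof.
  unfold pow_sqrt.
  destruct (Rlt_le_dec lam x) as [Hx | [Hx | Hx]]; [| | subst x].
  - apply is_derive_Reals.
    assert (Hs := sqrt_lt_R0 (x - lam) ltac:(lra)).
    assert (Hss := sqrt_sqrt (x - lam) ltac:(lra)).
    auto_derive; [lra |].
    replace (x + - lam) with (x - lam) by ring. change (Init.Nat.pred (S n)) with n.
    set (s := sqrt (x - lam)) in *. set (P := (x - lam) ^ n).
    change ((x - lam) ^ S n) with ((x - lam) * P). rewrite <- Hss.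
    rewrite S_INR. destruct n; simpl INR; field; lra.
  - intros eps Heps. exists (mkposreal (lam - x) ltac:(lra)). intros h Hh0 Hh.
    simpl in Hh. apply Rabs_def2 in Hh.
    rewrite !sqrt_neg_0 by lra. rewrite !Rmult_0_r.
    replace ((0 - 0) / h - 0) with 0 by (field; exact Hh0). rewrite Rabs_R0. lra.
  - intros eps Heps.
    assert (Hd : 0 < Rmin 1 (eps * eps)) by (apply Rmin_pos; nra).
    exists (mkposreal _ Hd). intros h Hh0 Hh. simpl in Hh.
    assert (Hm := Rmin_l 1 (eps * eps)). assert (Hm' := Rmin_r 1 (eps * eps)).
    replace (lam + h - lam) with h by ring. rewrite Rminus_diag, sqrt_0, !Rmult_0_r, !Rminus_0_r.
    destruct (Rlt_or_le 0 h) as [Hp | Hn].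
    + rewrite Rabs_pos_eq in Hh by lra.
      replace (h ^ S n * sqrt h / h) with (h ^ n * sqrt h) by (simpl; field; lra).
      assert (Hhn : 0 <= h ^ n <= 1).
      { split; [apply pow_le; lra | rewrite <- (pow1 n); apply pow_incr; lra]. }
      assert (Hsq : sqrt h < eps).
      { rewrite <- (sqrt_square eps) by lra. apply sqrt_lt_1_alt. lra. }
      assert (Hs0 := sqrt_pos h).
      rewrite Rabs_pos_eq by (apply Rmult_le_pos; lra). nra.
    + rewrite (sqrt_neg_0 h Hn), Rmult_0_r, Rdiv_0_l, Rabs_R0. lra.
Qed.

(* The k-th derivative of pow_sqrt r is
   (r + 1/2) (r - 1/2) ... (r - k + 3/2) * pow_sqrt (r - k). *)
Fixpoint pow_sqrt_coef (r k : nat) : R :=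
  match k with
  | O => 1
  | S k => pow_sqrt_coef r k * (INR (r - k) + / 2)
  end.

Definition pow_sqrt_derivs (r k : nat) (x : R) : R :=
  pow_sqrt_coef r k * pow_sqrt (r - k) x.

Lemma pow_sqrt_derivs_Cr (r : nat) (a b : R) :
  Cr_with_derivs r a b (pow_sqrt_derivs r 0) (pow_sqrt_derivs r).
Proof.
  split; [| split].
  - reflexivity.
  - intros k x Hk _. apply deriv_within_of_derivable_pt_lim.
    unfold pow_sqrt_derivs. simpl pow_sqrt_coef. rewrite Rmult_assoc.
    apply derivable_pt_lim_scal.
    replace (r - k)%nat with (S (r - S k)) by lia.
    apply derivable_pt_lim_pow_sqrt.
  - intros x _. apply cont_within_of_continuity_pt.
    apply continuity_pt_scal, continuity_pt_pow_sqrt.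
Qed.

End PowSqrt.

Lemma pow_sqrt_not_dominated (n : nat) (d M : R) :
  0 < d -> 0 < M -> exists t, 0 < t <= d /\ M * t ^ S n < t ^ n * sqrt t.
Proof.
  intros Hd HM.
  assert (Ht : 0 < Rmin d (/ (2 * M * M))).
  { apply Rmin_pos; [lra | apply Rinv_0_lt_compat; nra]. }
  set (t := Rmin d (/ (2 * M * M))) in *.
  assert (Htd := Rmin_l d (/ (2 * M * M))). assert (HtM := Rmin_r d (/ (2 * M * M))).
  fold t in Htd, HtM.
  exists t. split; [lra |].
  assert (Htn := pow_lt t n Ht). simpl.
  replace (M * (t * t ^ n)) with (t ^ n * (M * t)) by ring.
  apply Rmult_lt_compat_l; [exact Htn |].
  assert (Hs := sqrt_lt_R0 t Ht). assert (Hss := sqrt_sqrt t ltac:(lra)).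
  assert (HMt : M * M * t <= / 2).
  { replace (/ 2) with (M * M * / (2 * M * M)) by (field; lra).
    apply Rmult_le_compat_l; [nra | exact HtM]. }
  assert (HMs : M * sqrt t < 1) by nra.
  rewrite <- Hss at 1. nra.
Qed.

Lemma sign_left_of_root (h h' : R -> R) (lam d s : R) :
  (forall c, lam - d <= c <= lam -> derivable_pt_lim h c (h' c)) -> h lam = 0 ->
  (forall x, lam - d < x < lam -> 0 < s * h' x) ->
  forall x, lam - d < x < lam -> 0 < - s * h x.
Proof.
  intros Hh Hroot Hpos x Hx.
  destruct (MVT_cor2 h h' x lam ltac:(lra)) as [c [Hc Hcx]].
  { intros c Hc. apply Hh. lra. }
  assert (Hsc := Hpos c ltac:(lra)).
  assert (Hhx : h x = - (h' c * (lam - x))) by lra.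
  rewrite Hhx. replace (- s * - (h' c * (lam - x))) with (s * h' c * (lam - x)) by ring.
  apply Rmult_lt_0_compat; lra.
Qed.

Lemma le_pow_right_of_nonpos (h h' : R -> R) (lam d C : R) (n : nat) :
  0 <= C ->
  (forall c, lam <= c <= lam + d -> derivable_pt_lim h c (h' c)) -> h lam <= 0 ->
  (forall x, lam <= x <= lam + d -> h' x <= C * (x - lam) ^ n) ->
  forall x, lam <= x <= lam + d -> h x <= C * (x - lam) ^ S n.
Proof.
  intros HC Hh Hroot Hbound x Hx.
  destruct (Req_dec x lam) as [-> | Hxl].
  { rewrite Rminus_diag, pow_i, Rmult_0_r by lia. exact Hroot. }
  destruct (MVT_cor2 h h' lam x ltac:(lra)) as [c [Hc Hcx]].
  { intros c Hc. apply Hh. lra. }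
  assert (Hc' : h' c <= C * (x - lam) ^ n).
  { apply (Rle_trans _ _ _ (Hbound c ltac:(lra))).
    apply Rmult_le_compat_l; [exact HC | apply pow_incr; lra]. }
  assert (Hhc : h' c * (x - lam) <= C * (x - lam) ^ n * (x - lam))
    by (apply Rmult_le_compat_r; lra).
  simpl. lra.
Qed.

Section JetObstruction.

Variables (r : nat) (lam d M : R) (G : nat -> R -> R).
Hypotheses (Hd : 0 < d) (HM : 0 < M).
Hypothesis HG_deriv : forall k x, (k <= r)%nat -> lam - d <= x <= lam + d ->
  derivable_pt_lim (G k) x (G (S k) x).
Hypothesis HG_bound : forall x, lam - d <= x <= lam + d -> G (S r) x <= M.
Hypothesis HG_jet : forall k, (k < r)%nat -> G k lam = 0.

Lemma derivable_pt_lim_G_sub (j : nat) (x : R) : (j < r)%nat -> lam - d <= x <= lam + d ->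
  derivable_pt_lim (G (r - S j)) x (G (r - j)%nat x).
Proof.
  intros Hj Hx. replace (r - j)%nat with (S (r - S j)) by lia.
  apply HG_deriv; [lia | exact Hx].
Qed.

Lemma top_deriv_pos_left :
  0 < G r lam -> exists e, 0 < e <= d /\ forall x, lam - e < x < lam -> 0 < G r x.
Proof.
  intros Hpos. set (a := G r lam) in *.
  assert (He : 0 < Rmin d (a / M)) by (apply Rmin_pos; [| apply Rdiv_lt_0_compat]; lra).
  assert (Hed := Rmin_l d (a / M)). assert (HeM := Rmin_r d (a / M)).
  exists (Rmin d (a / M)). split; [lra |]. intros x Hx.
  destruct (MVT_cor2 (G r) (G (S r)) x lam ltac:(lra)) as [c [Hc Hcx]].
  { intros c Hc. apply HG_deriv; [lia | lra]. }
  assert (HMa : M * (lam - x) < a).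
  { replace a with (M * (a / M)) by (field; lra). apply Rmult_lt_compat_l; lra. }
  assert (Hc' : G (S r) c * (lam - x) <= M * (lam - x)).
  { apply Rmult_le_compat_r; [lra | apply HG_bound; lra]. }
  fold a in Hc. lra.
Qed.

(* Each G (r - j) vanishes at lam, so integrating from lam flips its sign. *)
Lemma alternating_signs_left (e : R) : 0 < e <= d ->
  (forall x, lam - e < x < lam -> 0 < G r x) ->
  forall j, (j <= r)%nat -> forall x, lam - e < x < lam -> 0 < (-1) ^ j * G (r - j)%nat x.
Proof.
  intros He Htop. induction j as [| j IH]; intros Hj x Hx.
  - rewrite Nat.sub_0_r, pow_O, Rmult_1_l. exact (Htop x Hx).
  - replace ((-1) ^ S j) with (- (-1) ^ j) by (simpl; ring).
    apply (sign_left_of_root _ (G (r - j)%nat) lam e); [| apply HG_jet; lia | | exact Hx].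
    + intros c Hc. apply derivable_pt_lim_G_sub; [lia | lra].
    + apply IH. lia.
Qed.

Lemma top_deriv_nonpos :
  Nat.even r = true -> (forall x, lam - d <= x <= lam -> G 0%nat x <= 0) -> G r lam <= 0.
Proof.
  intros Heven Hleft. apply Rnot_lt_le. intros Hpos.
  destruct (top_deriv_pos_left Hpos) as [e [He Htop]].
  assert (Hsign := alternating_signs_left e He Htop r (le_n r) (lam - e / 2) ltac:(lra)).
  apply Nat.even_spec in Heven as [q Hq].
  rewrite Nat.sub_diag, Hq, pow_1_even, Rmult_1_l in Hsign.
  specialize (Hleft (lam - e / 2) ltac:(lra)). lra.
Qed.

Lemma G0_le_pow_right :
  G r lam <= 0 -> forall x, lam <= x <= lam + d -> G 0%nat x <= M * (x - lam) ^ S r.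
Proof.
  intros Htop.
  enough (Hj : forall j, (j <= r)%nat -> forall x, lam <= x <= lam + d ->
                 G (r - j)%nat x <= M * (x - lam) ^ S j).
  { intros x Hx. rewrite <- (Nat.sub_diag r). exact (Hj r (le_n r) x Hx). }
  induction j as [| j IH]; intros Hj.
  - rewrite Nat.sub_0_r.
    apply (le_pow_right_of_nonpos _ (G (S r))); [lra | | exact Htop |].
    + intros c Hc. apply HG_deriv; [lia | lra].
    + intros x Hx. rewrite pow_O, Rmult_1_r. apply HG_bound. lra.
  - apply (le_pow_right_of_nonpos _ (G (r - j)%nat)); [lra | | | apply IH; lia].
    + intros c Hc. apply derivable_pt_lim_G_sub; [lia | lra].
    + rewrite HG_jet by lia. lra.
Qed.

Lemma no_C_succ_between_zero_and_pow_sqrt :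
  G r lam = 0 \/ Nat.even r = true ->
  (forall x, lam - d <= x <= lam -> G 0%nat x <= 0) ->
  ~ (forall x, lam <= x <= lam + d -> pow_sqrt lam r x <= G 0%nat x).
Proof.
  intros Hparity Hleft Hright.
  assert (Htop : G r lam <= 0)
    by (destruct Hparity as [-> | Heven]; [lra | exact (top_deriv_nonpos Heven Hleft)]).
  destruct (pow_sqrt_not_dominated r d M Hd HM) as [t [Ht Hlt]].
  assert (Hx : lam <= lam + t <= lam + d) by lra.
  assert (Hup := G0_le_pow_right Htop (lam + t) Hx).
  assert (Hlow := Hright (lam + t) Hx).
  unfold pow_sqrt in Hlow. replace (lam + t - lam) with t in Hup, Hlow by ring. lra.
Qed.

End JetObstruction.

Theorem lemma3p2 (r : nat) (lam : R) (Hlam : -1 < lam < 1) :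
  exists (f : R -> R) (F : nat -> R -> R),
    Cr_with_derivs r (-1) 1 f F /\
    (forall x, -1 <= x <= lam -> f x = 0) /\
    ~ (exists (g : R -> R) (G : nat -> R -> R) (eps : R),
         Cr_with_derivs (S r) (-1) 1 g G /\
         (forall i : nat, (Z.of_nat i <= rhat r)%Z -> G i lam = F i lam) /\
         0 < eps /\
         (forall x, lam - eps < x <= lam -> g x <= f x) /\
         (forall x, lam <= x < lam + eps -> f x <= g x)).
Proof.
  assert (Hzero : forall k x, x <= lam -> pow_sqrt_derivs lam r k x = 0).
  { intros k x Hx. unfold pow_sqrt_derivs. rewrite pow_sqrt_le_lam by exact Hx. ring. }
  exists (pow_sqrt_derivs lam r 0), (pow_sqrt_derivs lam r).
  split; [apply pow_sqrt_derivs_Cr |]. split; [intros x Hx; apply Hzero; lra |].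
  intros (g & G & eps & Hg & Hjet & Heps & Hleft & Hright).
  destruct (Cr_succ_near _ _ _ _ _ lam eps Hg Hlam Heps)
    as (d & M & [Hd Hde] & HM & Hderiv & Hbound & HG0).
  assert (HGjet : forall k, (k < r)%nat -> G k lam = 0).
  { intros k Hk. rewrite Hjet by (apply rhat_gt_pred, Hk). apply Hzero. lra. }
  apply (no_C_succ_between_zero_and_pow_sqrt r lam d M G Hd HM Hderiv Hbound HGjet).
  - destruct (Nat.even r) eqn:Hr; [right; reflexivity | left].
    rewrite Hjet by (rewrite rhat_odd by (rewrite <- Nat.negb_even, Hr; reflexivity); lia).
    apply Hzero. lra.
  - intros x Hx. rewrite HG0 by lra. rewrite <- (Hzero 0%nat x) by lra. apply Hleft. lra.
  - intros x Hx. rewrite HG0 by lra.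
    replace (pow_sqrt lam r x) with (pow_sqrt_derivs lam r 0 x)
      by (unfold pow_sqrt_derivs; rewrite Nat.sub_0_r; simpl; ring).
    apply Hright. lra.
Qed.
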